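(* Let $z\in V^k(\mathfrak g)$ be a PBW monomial $z=z^{(+)}z^{(-)}z^{(0)}\mathbf 1$ (notation as in the context). Then $\tilde L_{-1}z$ is a linear combination of PBW monomials $x=x^{(+)}x^{(-)}x^{(0)}\mathbf 1$ each satisfying all of: (a) $\deg(x^{(+)})\le\deg(z^{(+)})+1$ and $\deg(x^{(0)})\le\deg(z^{(0)})+1$; (b) if $z^{(-)}\neq1$ then $x^{(-)}\neq1$; (c) if $x^{(-)}=z^{(-)}$, then either $\deg(x^{(0)})=\deg(z^{(0)})+1$ or $x^{(0)}=z^{(0)}$; (d) if $\deg(x^{(0)})=\deg(z^{(0)})+1$, then $x^{(-)}=z^{(-)}$ and $\deg(x^{(+)})\le\deg(z^{(+)})$.
   Context: $\mathfrak g$ is a complex simple Lie algebra of rank $\ell$ with triangular decomposition $\mathfrak n_-\oplus\mathfrak h\oplus\mathfrak n_+$, positive roots $\Delta_+=\{\beta_1,\dots,\beta_q\}$ ordered so that $\mathrm{ht}(\beta_i)\le\mathrm{ht}(\beta_j)$ for $i<j$, and basis $\{u^i,e_{\beta_j},f_{\beta_j}\}$ with $\{u^i\}_{i=1}^\ell$ orthonormal in $\mathfrak h$ for the normalized invariant form $(\cdot|\cdot)$ and $(e_{\beta_j}|f_{\beta_j})=1$. $V^k(\mathfrak g)\cong U(t^{-1}\mathfrak g[t^{-1}])$ is the universal affine vertex algebra at level $k\neq-h^\vee$, $x(n)=x\otimes t^n$. A PBW monomial is $\mathbf 1$ or an element $z=z^{(+)}z^{(-)}z^{(0)}\mathbf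 1$ with $z^{(+)}=\prod_{j=1}^q\prod_{s} e_{\beta_j}(-s)^{a_{j,s}}$, $z^{(-)}=\prod_{j=1}^q\prod_s f_{\beta_j}(-s)^{b_{j,s}}$, $z^{(0)}=\prod_{i=1}^\ell\prod_s u^i(-s)^{c_{i,s}}$ (products in the fixed order $j=1,\dots,q$, $s=1,2,\dots$; $s\ge1$; exponents nonnegative integers); these form a basis of $V^k(\mathfrak g)$. $\deg$ of such a factor is the total number of factors (sum of exponents). $\tilde L_{-1}:=\frac{1}{k+h^\vee}\big(\sum_{i=1}^\ell u^i(-1)u^i(0)+\sum_{\alpha\in\Delta_+}e_\alpha(-1)f_\alpha(0)\big)$, acting on $V^k(\mathfrak g)$ by left multiplication. *)

From HB Require Import structures.
From mathcomp Require Import all_boot all_algebra.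
From mathcomp Require Import complex.
From mathcomp Require Import reals.

Set Implicit Arguments.
Unset Strict Implicit.
Unset Printing Implicit Defensive.

Import GRing.Theory.
Local Open Scope ring_scope.

(*   beta j i  stands for  beta_j(u^i).                                      *)

Section LieAlgebra.
Variables (F : fieldType) (g : vectType F).

Definition is_lie_bracket (br : g -> g -> g) : Prop :=
  [/\ forall (a : F) x y z, br (a *: x + y) z = a *: br x z + br y z,
      forall (a : F) x y z, br z (a *: x + y) = a *: br z x + br z y,
      forall x, br x x = 0 &
      forall x y z, br x (br y z) + br y (br z x) + br z (br x y) = 0].

Definition lie_ideal (br : g -> g -> g) (I : {vspace g}) : Prop :=
  forall x y, y \in I -> br x y \in I.

Definition simple_lie (br : g -> g -> g) : Prop :=
  is_lie_bracket br /\
  (exists x y, br x y != 0) /\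
  (forall I : {vspace g}, lie_ideal br I -> I = 0%VS \/ I = fullv).

Definition invariant_form (br : g -> g -> g) (frm : g -> g -> F) : Prop :=
  [/\ forall (a : F) x y z, frm (a *: x + y) z = a * frm x z + frm y z,
      forall x y, frm x y = frm y x,
      forall x, (forall y, frm x y = 0) -> x = 0 &
      forall x y z, frm (br x y) z = frm x (br y z)].

End LieAlgebra.

Section RootData.
Variables (F : fieldType) (ell q : nat).

(* Delta_+ = {beta_1, ..., beta_q} is a positive system: there are ell of
   the beta_j (the simple roots  beta_(alpha r), r < ell) such that every
   beta_j = \sum_r cf j r * beta_(alpha r) with nonnegative integers cf j r;
   the height is  ht(beta_j) = \sum_r cf j r.  We require
   ht(beta_i) <= ht(beta_j) for i < j, and the normalization of the form:
   (theta|theta) = 2 for the highest root theta (the root of maximal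
   height), where the form induced on h^* is computed in the orthonormal
   basis u^i : (lambda|mu) = \sum_i lambda(u^i) mu(u^i). *)
Definition positive_system_by_height (beta : 'I_q -> 'I_ell -> F) : Prop :=
  exists (alpha : 'I_ell -> 'I_q) (cf : 'I_q -> 'I_ell -> nat),
    let ht j := (\sum_(r < ell) cf j r)%N in
    [/\ forall j i, beta j i = \sum_(r < ell) (cf j r)%:R * beta (alpha r) i,
        forall i j : 'I_q, (i < j)%N -> (ht i <= ht j)%N &
        forall j : 'I_q, (forall j', (ht j' <= ht j)%N) ->
          \sum_(i < ell) beta j i ^+ 2 = 2].

End RootData.

Section SimpleLieSetup.
Variables (F : fieldType) (g : vectType F) (ell q : nat).

Definition simple_lie_setup (br : g -> g -> g) (frm : g -> g -> F)
    (u : 'I_ell -> g) (e f : 'I_q -> g) (beta : 'I_q -> 'I_ell -> F) : Prop :=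
  [/\ simple_lie br /\ invariant_form br frm,
      basis_of fullv ([seq u i | i <- enum 'I_ell] ++ [seq e j | j <- enum 'I_q]
                        ++ [seq f j | j <- enum 'I_q]),
      [/\ forall i i', br (u i) (u i') = 0,
          forall i j, br (u i) (e j) = beta j i *: e j,
          forall i j, br (u i) (f j) = - beta j i *: f j &
          forall j, (exists i, beta j i != 0)] &
      positive_system_by_height beta /\
      ((forall i i', frm (u i) (u i') = (i == i')%:R) /\
       (forall j, frm (e j) (f j) = 1))].

(* The dual Coxeter number h^vee: the Casimir element of the normalized form
   (dual bases  u^i <-> u^i,  e_beta <-> f_beta) acts on the adjoint
   representation by the scalar 2 h^vee. *)
Definition dual_coxeter (br : g -> g -> g) (u : 'I_ell -> g) (e f : 'I_q -> g)
    (hv : F) : Prop :=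
  forall y, \sum_(i < ell) br (u i) (br (u i) y)
            + \sum_(j < q) (br (e j) (br (f j) y) + br (f j) (br (e j) y))
          = (2 * hv) *: y.

End SimpleLieSetup.

(*   A letter is a factor e_{beta_j}(-s) (inl (inl (j,s))),                   *)
(*   f_{beta_j}(-s) (inl (inr (j,s))) or u^i(-s) (inr (i,s)).                 *)
(*   A PBW monomial is a sorted list of letters (with s >= 1) in the fixed    *)
(*   order: all e's, then all f's, then all u's; within each block by index,  *)
(*   then by s.  Repetitions encode exponents.  The empty list is  1.         *)

Definition letter (ell q : nat) : Type := ('I_q * nat + 'I_q * nat + 'I_ell * nat)%type.

Section PBW.
Variables (ell q : nat).

Definition is_E (l : letter ell q) : bool :=
  if l is inl (inl _) then true else false.
Definition is_F (l : letter ell q) : bool :=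
  if l is inl (inr _) then true else false.
Definition is_U (l : letter ell q) : bool :=
  if l is inr _ then true else false.

Definition letter_s (l : letter ell q) : nat :=
  match l with inl (inl (_, s)) => s | inl (inr (_, s)) => s | inr (_, s) => s end.

Definition letter_key (l : letter ell q) : nat * nat * nat :=
  match l with
  | inl (inl (j, s)) => (0%N, nat_of_ord j, s)
  | inl (inr (j, s)) => (1%N, nat_of_ord j, s)
  | inr (i, s) => (2%N, nat_of_ord i, s)
  end.

Definition letter_le (l1 l2 : letter ell q) : bool :=
  let: (a1, b1, c1) := letter_key l1 in
  let: (a2, b2, c2) := letter_key l2 in
  [|| (a1 < a2)%N, (a1 == a2) && (b1 < b2)%N
    | [&& a1 == a2, b1 == b2 & (c1 <= c2)%N]].

Definition pbw (m : seq (letter ell q)) : bool :=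
  sorted letter_le m && all (fun l => 0 < letter_s l)%N m.

(* the three factors z^(+), z^(-), z^(0) of a monomial, and deg = length *)
Definition pbw_plus  (m : seq (letter ell q)) := filter is_E m.
Definition pbw_minus (m : seq (letter ell q)) := filter is_F m.
Definition pbw_zero  (m : seq (letter ell q)) := filter is_U m.

Definition lemma3p2_conditions (z x : seq (letter ell q)) : Prop :=
  [/\
      (size (pbw_plus x) <= size (pbw_plus z) + 1)%N /\
      (size (pbw_zero x) <= size (pbw_zero z) + 1)%N,
      pbw_minus z != [::] -> pbw_minus x != [::],
      pbw_minus x = pbw_minus z ->
        size (pbw_zero x) = (size (pbw_zero z) + 1)%N \/ pbw_zero x = pbw_zero z &
      size (pbw_zero x) = (size (pbw_zero z) + 1)%N ->
        pbw_minus x = pbw_minus z /\ (size (pbw_plus x) <= size (pbw_plus z))%N].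

End PBW.

(* Part 3. The universal affine vertex algebra V^k(g) as a module over the   *)
(*   affine Lie algebra:  act x n  is the action of  x(n) = x (x) t^n,       *)
(*   vac is the vacuum 1.  V^k(g) = U(ghat) (x)_{U(g[t] + CK)} C_k is        *)
(*   characterized (up to isomorphism) by: the ghat commutation relations    *)
(*   with K = k, x(n) 1 = 0 for n >= 0, and the PBW monomials applied to 1   *)
(*   form a basis.                                                           *)

Section Affine.
Variables (F : fieldType) (g : vectType F) (ell q : nat).
Variables (u : 'I_ell -> g) (e f : 'I_q -> g).
Variables (V : lmodType F) (vac : V) (act : g -> int -> V -> V).

Definition letter_vec (l : letter ell q) : g :=
  match l with inl (inl (j, _)) => e j | inl (inr (j, _)) => f j | inr (i, _) => u i end.

Definition letter_mode (l : letter ell q) : int := - (letter_s l)%:Z.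

Definition pbw_eval (m : seq (letter ell q)) : V :=
  foldr (fun l v => act (letter_vec l) (letter_mode l) v) vac m.

Definition pbw_lin_comb (P : seq (letter ell q) -> Prop) (v : V) : Prop :=
  exists s : seq (F * seq (letter ell q)),
    (forall p, p \in s -> pbw p.2 /\ P p.2) /\
    v = \sum_(p <- s) p.1 *: pbw_eval p.2.

Definition universal_affine_VA (br : g -> g -> g) (frm : g -> g -> F) (k : F)
  : Prop :=
  [/\ forall (a : F) x y n v, act (a *: x + y) n v = a *: act x n v + act y n v,
      forall x n (a : F) v w, act x n (a *: v + w) = a *: act x n v + act x n w,
      forall x y (m n : int) v,
        act x m (act y n v) - act y n (act x m v)
        = act (br x y) (m + n) v
          + (if m + n == 0 then (m%:~R * frm x y * k) *: v else 0),
      forall x (n : int), 0 <= n -> act x n vac = 0 &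
      (forall v, pbw_lin_comb (fun _ => True) v) /\
      (forall s : seq (F * seq (letter ell q)),
          (forall p, p \in s -> pbw p.2) -> uniq (map snd s) ->
          \sum_(p <- s) p.1 *: pbw_eval p.2 = 0 ->
          forall p, p \in s -> p.1 = 0)].

Definition tildeL_m1 (k hv : F) (v : V) : V :=
  (k + hv)^-1 *: (\sum_(i < ell) act (u i) (-1) (act (u i) 0 v)
                  + \sum_(j < q) act (e j) (-1) (act (f j) 0 v)).

End Affine.

(* Since u^i(0) acts on a PBW monomial z by a scalar and f_a(0) kills the vacuum,
   L~_{-1} z is a combination of u^i(-1) z and of the words e_a(-1) z_1 .. [f_a, z_k] .. z_n 1.
   These words are brought to PBW order by swapping adjacent letters; swapping y1(-s1) and
   y2(-s2) produces the correction term [y1, y2](-s1-s2).  As no nonempty sum of positive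
   roots vanishes (the simple roots are independent because g is simple), [n+, n+] <= n+
   and [n-, n-] <= n-, while u^i only rescales root vectors.  Hence straightening never
   turns f- or u-letters into e-letters, and a u-letter moved to the right either survives,
   keeping the f-part and adding one u-letter, or is absorbed into an f-letter, raising the
   total mode of the f-part without adding u-letters.  Conditions (a)-(d) are read off these
   invariants. *)

From HB Require Import structures.
From mathcomp Require Import all_boot all_algebra.
From mathcomp Require Import complex.
From mathcomp Require Import reals.
From mathcomp Require Import zify.

Set Implicit Arguments.
Unset Strict Implicit.
Unset Printing Implicit Defensive.
Import GRing.Theory.
Local Open Scope ring_scope.

Section LinearMap.
Variables (R : pzRingType) (U W : lmodType R) (phi : U -> W).
Hypothesis phi_lin : linear phi.

Let phiL : {linear U -> W} := HB.pack phi (GRing.isLinear.Build _ _ _ _ phi phi_lin).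

Lemma lin_map0 : phi 0 = 0. Proof. exact: (linear0 phiL). Qed.
Lemma lin_mapD x y : phi (x + y) = phi x + phi y. Proof. exact: (linearD phiL). Qed.
Lemma lin_mapZ a x : phi (a *: x) = a *: phi x. Proof. exact: (linearZZ phiL). Qed.
Lemma lin_map_sum (I : Type) (r : seq I) (P : pred I) (G : I -> U) :
  phi (\sum_(i <- r | P i) G i) = \sum_(i <- r | P i) phi (G i).
Proof. exact: (linear_sum phiL). Qed.

End LinearMap.

(** * Words and the PBW order *)

Lemma filter_nil (T : Type) (p : pred T) (s : seq T) : all (predC p) s -> filter p s = [::].
Proof. by elim: s => //= a s IH /andP[/negbTE -> /IH]. Qed.

Lemma sub_all_filter (T : Type) (p q : pred T) (s : seq T) : all p s -> all p (filter q s).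
Proof. by move=> H; rewrite all_filter; apply: sub_all H => a /= ->; rewrite implybT. Qed.

Notation basis_index ell q := ('I_q + 'I_q + 'I_ell)%type.

Section Letters.
Variables (ell q : nat).
Notation letter := (letter ell q).
Notation le := (@letter_le ell q).
Notation plus := (@pbw_plus ell q).
Notation minus := (@pbw_minus ell q).
Notation zero := (@pbw_zero ell q).
Implicit Types (l y : letter) (x w A : seq letter) (k : basis_index ell q).

Definition mk_letter k (s : nat) : letter :=
  match k with
  | inl (inl j) => inl (inl (j, s))
  | inl (inr j) => inl (inr (j, s))
  | inr i => inr (i, s)
  end.

Definition letter_index l : basis_index ell q :=
  match l with
  | inl (inl (j, _)) => inl (inl j)
  | inl (inr (j, _)) => inl (inr j)
  | inr (i, _) => inr i
  end.

Definition E_index k := if k is inl (inl _) then true else false.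
Definition F_index k := if k is inl (inr _) then true else false.

Lemma letter_s_mk k s : letter_s (mk_letter k s) = s. Proof. by case: k => [[]|]. Qed.
Lemma is_E_mk k s : is_E (mk_letter k s) = E_index k. Proof. by case: k => [[]|]. Qed.
Lemma is_F_mk k s : is_F (mk_letter k s) = F_index k. Proof. by case: k => [[]|]. Qed.
Lemma E_index_letter l : E_index (letter_index l) = is_E l.
Proof. by case: l => [[[]|[]]|[]]. Qed.
Lemma F_index_letter l : F_index (letter_index l) = is_F l.
Proof. by case: l => [[[]|[]]|[]]. Qed.

Lemma letter_kinds l : [|| is_E l, is_F l | is_U l].
Proof. by case: l => [[[]|[]]|[]]. Qed.
Lemma E_notF l : is_E l -> is_F l = false. Proof. by case: l => [[[]|[]]|[]]. Qed.
Lemma E_notU l : is_E l -> is_U l = false. Proof. by case: l => [[[]|[]]|[]]. Qed.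
Lemma F_notE l : is_F l -> is_E l = false. Proof. by case: l => [[[]|[]]|[]]. Qed.
Lemma F_notU l : is_F l -> is_U l = false. Proof. by case: l => [[[]|[]]|[]]. Qed.
Lemma U_notE l : is_U l -> is_E l = false. Proof. by case: l => [[[]|[]]|[]]. Qed.
Lemma U_notF l : is_U l -> is_F l = false. Proof. by case: l => [[[]|[]]|[]]. Qed.
Lemma notE_FU l : ~~ is_E l -> is_F l || is_U l. Proof. by case: l => [[[]|[]]|[]]. Qed.

Definition letter_block l : nat := (letter_key l).1.1.

Lemma letter_blockE l : letter_block l = if is_E l then 0%N else if is_F l then 1%N else 2%N.
Proof. by case: l => [[[]|[]]|[]]. Qed.

Lemma block0_E l : (letter_block l <= 0)%N -> is_E l.
Proof. by case: l => [[[]|[]]|[]]. Qed.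
Lemma block1_notU l : (letter_block l <= 1)%N -> ~~ is_U l.
Proof. by case: l => [[[]|[]]|[]]. Qed.
Lemma block1_notE l : (1 <= letter_block l)%N -> ~~ is_E l.
Proof. by case: l => [[[]|[]]|[]]. Qed.
Lemma block2_U l : (2 <= letter_block l)%N -> is_U l.
Proof. by case: l => [[[]|[]]|[]]. Qed.

Lemma letter_le_block l1 l2 : le l1 l2 -> (letter_block l1 <= letter_block l2)%N.
Proof.
rewrite /letter_le /letter_block; case: (letter_key l1) => [[a1 b1] c1].
case: (letter_key l2) => [[a2 b2] c2] /=.
by case/or3P => [/ltnW//|/andP[/eqP->]|/and3P[/eqP->]].
Qed.

Lemma letter_lt_block l1 l2 : (letter_block l1 < letter_block l2)%N -> le l1 l2.
Proof.
rewrite /letter_le /letter_block; case: (letter_key l1) => [[a1 b1] c1].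
by case: (letter_key l2) => [[a2 b2] c2] /= ->.
Qed.

Lemma letter_le_total l1 l2 : le l1 l2 || le l2 l1.
Proof.
rewrite /letter_le; case: (letter_key l1) => [[a1 b1] c1].
case: (letter_key l2) => [[a2 b2] c2].
case: (ltngtP a1 a2) => //= _; case: (ltngtP b1 b2) => //= _.
exact: leq_total.
Qed.

Lemma le_E_notE l t : is_E l -> ~~ is_E t -> le l t.
Proof.
by move=> El Et; apply: letter_lt_block; rewrite !letter_blockE El (negbTE Et); case: ifP.
Qed.

Lemma le_F_U l t : is_F l -> is_U t -> le l t.
Proof.
by move=> Fl Ut; apply: letter_lt_block; rewrite !letter_blockE Fl (F_notE Fl) (U_notE Ut) (U_notF Ut).
Qed.

Lemma sorted_cat_cons_block A l w : sorted le (A ++ l :: w) ->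
  (forall a, a \in A -> letter_block a <= letter_block l)%N /\
  (forall b, b \in w -> letter_block l <= letter_block b)%N.
Proof.
have sorted_block x : sorted le x -> sorted leq (map letter_block x).
  elim: x => //= a [//|b x] IH /andP[ab sx] /=.
  by rewrite letter_le_block //=; apply: IH.
move/sorted_block; rewrite (sorted_pairwise leq_trans) map_cat pairwise_cat /=.
case/and3P=> /allrelP HA _ /andP[/allP Hw _]; split.
  by move=> a aA; apply: HA; rewrite ?map_f ?mem_head.
by move=> b bw; apply: Hw; rewrite map_f.
Qed.

Definition creation l := (0 < letter_s l)%N.

Definition mode_sum w : nat := sumn (map (@letter_s ell q) w).

Lemma mode_sum_cons l w : mode_sum (l :: w) = (letter_s l + mode_sum w)%N.
Proof. by []. Qed.

Lemma mode_sum_cat w1 w2 : mode_sum (w1 ++ w2) = (mode_sum w1 + mode_sum w2)%N.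
Proof. by rewrite /mode_sum map_cat sumn_cat. Qed.

Lemma mode_sum_perm w1 w2 : perm_eq w1 w2 -> mode_sum w1 = mode_sum w2.
Proof. by move=> H; apply: perm_sumn; apply: perm_map. Qed.

Lemma mode_sum_gt0 w : (0 < mode_sum w)%N -> w != [::].
Proof. by case: w. Qed.

Lemma pbw_behead l w : pbw (l :: w) -> pbw w.
Proof. by rewrite /pbw /= => /andP[/path_sorted -> /andP[_ ->]]. Qed.

Lemma pbw_head_creation l w : pbw (l :: w) -> creation l.
Proof. by case/andP => _ /andP[]. Qed.

Lemma all_plus x : all (@is_E ell q) (plus x). Proof. exact: filter_all. Qed.
Lemma all_minus x : all (@is_F ell q) (minus x). Proof. exact: filter_all. Qed.
Lemma all_zero x : all (@is_U ell q) (zero x). Proof. exact: filter_all. Qed.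

Lemma plus_cons_E l x : is_E l ->
  [/\ plus (l :: x) = l :: plus x, minus (l :: x) = minus x & zero (l :: x) = zero x].
Proof. by move=> H; rewrite /pbw_plus /pbw_minus /pbw_zero /= H (E_notF H) (E_notU H). Qed.

Lemma minus_cons_F l x : is_F l ->
  [/\ plus (l :: x) = plus x, minus (l :: x) = l :: minus x & zero (l :: x) = zero x].
Proof. by move=> H; rewrite /pbw_plus /pbw_minus /pbw_zero /= H (F_notE H) (F_notU H). Qed.

Lemma minus_cat x w : minus (x ++ w) = minus x ++ minus w. Proof. exact: filter_cat. Qed.
Lemma zero_cat x w : zero (x ++ w) = zero x ++ zero w. Proof. exact: filter_cat. Qed.

Lemma minus_allF x : all (@is_F ell q) x -> minus x = x. Proof. exact/all_filterP. Qed.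
Lemma zero_allU x : all (@is_U ell q) x -> zero x = x. Proof. exact/all_filterP. Qed.

Lemma minus_allU x : all (@is_U ell q) x -> minus x = [::].
Proof. by move=> Ux; apply: filter_nil; apply: sub_all Ux => a /= /U_notF ->. Qed.

Lemma zero_allF x : all (@is_F ell q) x -> zero x = [::].
Proof. by move=> Fx; apply: filter_nil; apply: sub_all Fx => a /= /F_notU ->. Qed.

Lemma pbw_parts_cat E' M Z : all (@is_E ell q) E' -> all (@is_F ell q) M -> all (@is_U ell q) Z ->
  [/\ plus (E' ++ M ++ Z) = E', minus (E' ++ M ++ Z) = M & zero (E' ++ M ++ Z) = Z].
Proof.
move=> HE HM HZ; rewrite /pbw_plus /pbw_minus /pbw_zero !filter_cat.
rewrite (all_filterP HE) (all_filterP HM) (all_filterP HZ) !filter_nil ?cats0 //.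
all: by apply: sub_all _ (HE) || apply: sub_all _ (HM) || apply: sub_all _ (HZ);
  move=> l /= H; rewrite ?(E_notF H) ?(E_notU H) ?(F_notE H) ?(F_notU H) ?(U_notE H) ?(U_notF H).
Qed.

Lemma sorted_pbw_parts x : sorted le x -> x = plus x ++ minus x ++ zero x.
Proof.
elim: x => //= l x IH Hs.
have {}IH := IH (path_sorted Hs).
have [_ Hr] := @sorted_cat_cons_block [::] l x Hs.
rewrite {1}IH /pbw_plus /pbw_minus /pbw_zero /=.
case/or3P: (letter_kinds l) => H.
- by rewrite H (E_notF H) (E_notU H).
- rewrite H (F_notE H) (F_notU H) /= (@filter_nil _ (@is_E ell q)) //.
  by apply/allP => b /Hr; rewrite (letter_blockE l) H (F_notE H) => /block1_notE.
- have Ux : all (@is_U ell q) x.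
    by apply/allP => b /Hr; rewrite (letter_blockE l) (U_notE H) (U_notF H) => /block2_U.
  rewrite (U_notE H) (U_notF H) H /= (@filter_nil _ (@is_E ell q)) ?(@filter_nil _ (@is_F ell q)) //;
  by apply: sub_all Ux => b /= Hb; rewrite ?(U_notF Hb) ?(U_notE Hb).
Qed.

Lemma pbw_notE_head l x : pbw (l :: x) -> ~~ is_E l -> plus (l :: x) = [::].
Proof.
case/andP=> Hs _ El; have [_ Hr] := @sorted_cat_cons_block [::] l x Hs.
apply: filter_nil => /=; rewrite El; apply/allP => b /Hr Hb.
by apply/block1_notE/(leq_trans _ Hb); rewrite (letter_blockE l) (negbTE El); case: ifP.
Qed.

Lemma pbw_U_head l x : pbw (l :: x) -> is_U l -> all (@is_U ell q) (l :: x).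
Proof.
case/andP=> Hs _ Ul; have [_ Hr] := @sorted_cat_cons_block [::] l x Hs.
by rewrite /= Ul; apply/allP => b /Hr; rewrite (letter_blockE l) (U_notE Ul) (U_notF Ul) => /block2_U.
Qed.

Lemma sorted_F_cons l M Z : is_F l -> sorted le (l :: M) -> sorted le (M ++ Z) ->
  all (@is_U ell q) Z -> sorted le (l :: M ++ Z).
Proof.
move=> Fl; case: M => [|b M] /=; last by case/andP => -> _ ->.
by case: Z => [|b Z] //= _ -> /andP[Ub _]; rewrite le_F_U.
Qed.

Fixpoint inversions w : nat :=
  if w is a :: w' then (count (fun b => ~~ le a b) w' + inversions w')%N else 0%N.

Lemma perm_swap_adjacent A y1 y2 w : perm_eq (A ++ y2 :: y1 :: w) (A ++ y1 :: y2 :: w).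
Proof.
by rewrite perm_cat2l -[y2 :: y1 :: w]/([:: y2; y1] ++ w)
           -[y1 :: y2 :: w]/([:: y1; y2] ++ w) perm_cat2r (perm_catC [:: y2]).
Qed.

Lemma inversions_swap A y1 y2 w : ~~ le y1 y2 ->
  (inversions (A ++ y2 :: y1 :: w) < inversions (A ++ y1 :: y2 :: w))%N.
Proof.
move=> H; elim: A => [|a A IH] /=; last first.
  by rewrite (permP (perm_swap_adjacent A y1 y2 w)) ltn_add2l.
have -> : le y2 y1 by move: (letter_le_total y1 y2); rewrite (negbTE H).
by rewrite H /= add0n addnA [X in (X + _ < _)%N]addnC addnA ltnS leqnn.
Qed.

Lemma unsorted_adjacent w : ~~ sorted le w ->
  exists A y1 y2 w', w = A ++ y1 :: y2 :: w' /\ ~~ le y1 y2.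
Proof.
elim: w => // a w IH; case: w IH => // b w IH /=; rewrite negb_and.
case/orP => [H|/IH [A [y1 [y2 [w' [-> Hy]]]]]]; first by exists [::], a, b, w.
by exists (a :: A), y1, y2, w'.
Qed.

End Letters.

Arguments creation {ell q} l.

Section Straightening.
Variables (F : fieldType) (g : vectType F) (ell q : nat).
Variables (br : g -> g -> g) (frm : g -> g -> F) (lev : F).
Variables (u : 'I_ell -> g) (e f : 'I_q -> g) (beta : 'I_q -> 'I_ell -> F).
Variables (V : lmodType F) (vac : V) (act : g -> int -> V -> V).

Notation letter := (letter ell q).
Notation le := (@letter_le ell q).
Notation plus := (@pbw_plus ell q).
Notation minus := (@pbw_minus ell q).
Notation zero := (@pbw_zero ell q).
Notation bidx := (basis_index ell q).
Notation eval := (pbw_eval u e f vac act).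
Notation lin_comb := (pbw_lin_comb u e f vac act).
Notation vecl := (letter_vec u e f).
Notation is_E := (@is_E ell q).
Notation is_F := (@is_F ell q).
Notation is_U := (@is_U ell q).
Implicit Types (l y : letter) (x w A P : seq letter) (k : bidx) (Q : seq letter -> Prop).

Definition bvec k : g := vecl (mk_letter k 0).

Lemma vecl_mk k s : vecl (mk_letter k s) = bvec k. Proof. by case: k => [[]|]. Qed.
Lemma vecl_index l : vecl l = bvec (letter_index l). Proof. by case: l => [[[]|[]]|[]]. Qed.

(** * Linear combinations of PBW monomials *)

Definition act_word A v := foldr (fun l v => act (vecl l) (letter_mode l) v) v A.

Lemma eval_cons l x : eval (l :: x) = act (vecl l) (letter_mode l) (eval x).
Proof. by []. Qed.

Lemma eval_cat A x : eval (A ++ x) = act_word A (eval x).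
Proof. by rewrite /pbw_eval foldr_cat. Qed.

Lemma lin_comb0 Q : lin_comb Q 0.
Proof. by exists [::]; rewrite big_nil. Qed.

Lemma lin_combD Q v1 v2 : lin_comb Q v1 -> lin_comb Q v2 -> lin_comb Q (v1 + v2).
Proof.
move=> [s1 [H1 ->]] [s2 [H2 ->]]; exists (s1 ++ s2); split; last by rewrite big_cat.
by move=> p; rewrite mem_cat => /orP[/H1|/H2].
Qed.

Lemma lin_combZ Q a v : lin_comb Q v -> lin_comb Q (a *: v).
Proof.
move=> [s [H ->]]; exists [seq (a * p.1, p.2) | p <- s]; split.
  by move=> p /mapP[p' /H Hp ->].
by rewrite big_map scaler_sumr; apply: eq_bigr => p _; rewrite scalerA.
Qed.

Lemma lin_comb_sum Q (I : Type) (r : seq I) (Pi : pred I) (G : I -> V) :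
  (forall i, Pi i -> lin_comb Q (G i)) -> lin_comb Q (\sum_(i <- r | Pi i) G i).
Proof.
move=> H; elim/big_rec: _ => [|i v Pi_i Hv]; first exact: lin_comb0.
by apply: lin_combD => //; apply: H.
Qed.

Lemma lin_comb_weaken Q Q' v :
  (forall x, pbw x -> Q x -> Q' x) -> lin_comb Q v -> lin_comb Q' v.
Proof.
move=> HP [s [H ->]]; exists s; split => // p /H [H1 H2]; split => //; exact: HP.
Qed.

Lemma lin_comb_eval Q x : pbw x -> Q x -> lin_comb Q (eval x).
Proof.
move=> H1 H2; exists [:: (1, x)]; split; first by move=> p; rewrite inE => /eqP->.
by rewrite big_seq1 scale1r.
Qed.

Lemma lin_comb_linear (phi : V -> V) Q Q' v : linear phi ->
  (forall x, pbw x -> Q x -> lin_comb Q' (phi (eval x))) -> lin_comb Q v -> lin_comb Q' (phi v).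
Proof.
move=> phi_lin H [s [Hs ->]]; rewrite (lin_map_sum phi_lin) big_seq.
apply: lin_comb_sum => p /Hs [Hp HPp]; rewrite (lin_mapZ phi_lin).
exact/lin_combZ/H.
Qed.

Hypothesis act_linl : forall (a : F) (x y : g) n v, act (a *: x + y) n v = a *: act x n v + act y n v.
Hypothesis act_linr : forall (x : g) n (a : F) (v w : V), act x n (a *: v + w) = a *: act x n v + act x n w.

Lemma act_lin (x : g) n : linear (act x n). Proof. exact: act_linr. Qed.
Lemma act_lin_g n (v : V) : linear (fun x : g => act x n v). Proof. by move=> a x y; apply: act_linl. Qed.

Lemma act_word_lin A : linear (act_word A).
Proof. by elim: A => [//|l A IH] a v w /=; rewrite IH act_linr. Qed.

(** * Brackets of basis vectors *)

Hypothesis br_lie : is_lie_bracket br.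

Lemma br_linl (z : g) : linear (br^~ z). Proof. by case: br_lie => H _ _ _ a x y; apply: H. Qed.
Lemma br_linr (z : g) : linear (br z). Proof. by case: br_lie => _ H _ _ a x y; apply: H. Qed.

Lemma brZl (z : g) a (x : g) : br (a *: x) z = a *: br x z. Proof. exact: (lin_mapZ (br_linl z)). Qed.
Lemma brZr (z : g) a (x : g) : br z (a *: x) = a *: br z x. Proof. exact: (lin_mapZ (br_linr z)). Qed.

Lemma brxx (x : g) : br x x = 0. Proof. by case: br_lie. Qed.

Lemma br_anti (x y : g) : br x y = - br y x.
Proof.
apply/eqP; rewrite -addr_eq0; apply/eqP.
have := brxx (x + y).
rewrite (lin_mapD (br_linl _)) !(lin_mapD (br_linr _)) !brxx add0r addr0 => <-.
by rewrite addrC.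
Qed.

Lemma br_leibniz (x y z : g) : br x (br y z) = br (br x y) z + br y (br x z).
Proof.
case: br_lie => _ _ _ /(_ x y z) /eqP.
rewrite (br_anti z x) (br_anti z (br x y)) -scaleN1r brZr scaleN1r.
by rewrite -addrA addr_eq0 opprD !opprK addrC => /eqP.
Qed.

Hypothesis g_basis : basis_of fullv ([seq u i | i <- enum 'I_ell] ++
   [seq e j | j <- enum 'I_q] ++ [seq f j | j <- enum 'I_q]).

Definition basis_enum : seq bidx := [seq inr i | i <- enum 'I_ell] ++
   [seq inl (inl j) | j <- enum 'I_q] ++ [seq inl (inr j) | j <- enum 'I_q].

Lemma perm_basis_enum : perm_eq basis_enum (index_enum bidx).
Proof.
apply: uniq_perm; rewrite ?index_enum_uniq //.
  have inj_uniq (T : finType) (h : T -> bidx) : injective h -> uniq [seq h i | i <- enum T].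
    by move=> h_inj; rewrite map_inj_uniq ?enum_uniq.
  rewrite /basis_enum !cat_uniq !inj_uniq /=; try by move=> ? ? [].
  rewrite andbT; apply/andP; split; apply/hasPn => k.
    by rewrite mem_cat => /orP [] /mapP [j _ ->]; apply/mapP => -[i _].
  by move=> /mapP [j _ ->]; apply/mapP => -[i _].
move=> k; rewrite mem_index_enum /basis_enum !mem_cat; case: k => [[j|j]|i].
- by rewrite (map_f (fun j => inl (inl j))) ?mem_enum ?orbT.
- by rewrite (map_f (fun j => inl (inr j))) ?mem_enum ?orbT.
- by rewrite (map_f inr) ?mem_enum.
Qed.

Lemma bvec_basis : basis_of fullv (map bvec basis_enum).
Proof. by move: g_basis; rewrite /basis_enum !map_cat -!map_comp. Qed.

Lemma bvec_span (x : g) : exists c : bidx -> F, x = \sum_k c k *: bvec k.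
Proof.
have Hx : x \in <<map bvec basis_enum>>%VS by rewrite (span_basis bvec_basis) memvf.
case: (free_span (basis_free bvec_basis) Hx) => c -> _.
by exists (c \o bvec); rewrite big_map (perm_big _ perm_basis_enum).
Qed.

Lemma bvec_free (c : bidx -> F) : \sum_k c k *: bvec k = 0 -> forall k, c k = 0.
Proof.
move=> H k; pose X := in_tuple (map bvec basis_enum).
have /freeP free_X : free X := basis_free bvec_basis.
have k_in : k \in basis_enum by rewrite (perm_mem perm_basis_enum) mem_index_enum.
have k_lt : (index k basis_enum < size (map bvec basis_enum))%N by rewrite size_map index_mem.
have := free_X (fun i => c (nth k basis_enum i)) _ (Ordinal k_lt).
rewrite /= nth_index //; apply; apply: etrans H.
rewrite -(perm_big _ perm_basis_enum) (big_nth k) big_mkord size_map.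
by apply: eq_bigr => i _; rewrite /X /= (nth_map k).
Qed.

Lemma bvec_coord_eq (c c' : bidx -> F) :
  \sum_k c k *: bvec k = \sum_k c' k *: bvec k -> c =1 c'.
Proof.
move=> H k; apply/eqP; rewrite -subr_eq0; apply/eqP; move: k.
by apply: bvec_free; rewrite -[RHS](subrr (\sum_k c' k *: bvec k)) -{1}H -sumrB;
   apply: eq_bigr => k _; rewrite scalerBl.
Qed.

Lemma bvec_coord_single k' a (c : bidx -> F) :
  a *: bvec k' = \sum_k c k *: bvec k -> forall k, c k != 0 -> k = k'.
Proof.
have -> : a *: bvec k' = \sum_k (if k == k' then a else 0) *: bvec k.
  by rewrite (bigD1 k') //= eqxx big1 ?addr0 // => k /negbTE ->; rewrite scale0r.
move=> /bvec_coord_eq H k; rewrite -H /=.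
by case: ifP => [/eqP //|_]; rewrite eqxx.
Qed.

Definition index_weight k : 'I_ell -> F :=
  match k with
  | inl (inl j) => beta j
  | inl (inr j) => fun i => - beta j i
  | inr _ => fun _ => 0
  end.

Hypothesis Cartan_abelian : forall i i', br (u i) (u i') = 0.
Hypothesis e_weight : forall i j, br (u i) (e j) = beta j i *: e j.
Hypothesis f_weight : forall i j, br (u i) (f j) = - beta j i *: f j.

Lemma br_u_bvec i k : br (u i) (bvec k) = index_weight k i *: bvec k.
Proof. by case: k => [[j|j]|i'] /=; rewrite ?e_weight ?f_weight ?Cartan_abelian ?scale0r. Qed.

Lemma weight_component (x : g) (mu : 'I_ell -> F) (c : bidx -> F) :
  x = \sum_k c k *: bvec k -> (forall i, br (u i) x = mu i *: x) ->
  forall k, c k != 0 -> index_weight k =1 mu.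
Proof.
move=> Hx Hmu k ck i.
have : \sum_k (c k * (index_weight k i - mu i)) *: bvec k = 0.
  have := Hmu i; rewrite Hx (lin_map_sum (br_linr _)) scaler_sumr => /eqP.
  rewrite -subr_eq0 -sumrB => /eqP; apply: etrans; apply: eq_bigr => k' _.
  by rewrite brZr br_u_bvec !scalerA mulrBr scalerBl (mulrC (mu i)).
move/bvec_free/(_ k)/eqP; rewrite mulf_eq0 (negbTE ck) /= subr_eq0.
by move/eqP.
Qed.

Lemma weight_br (x y : g) (mx my : 'I_ell -> F) :
  (forall i, br (u i) x = mx i *: x) -> (forall i, br (u i) y = my i *: y) ->
  forall i, br (u i) (br x y) = (mx i + my i) *: br x y.
Proof.
by move=> Hx Hy i; rewrite br_leibniz Hx Hy brZl brZr scalerDl.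
Qed.

Hypothesis g_simple : simple_lie br.

Lemma center_trivial (h : g) : (forall k, br h (bvec k) = 0) -> h = 0.
Proof.
move=> Hh; have central (x : g) : br h x = 0.
  case: (bvec_span x) => c ->; rewrite (lin_map_sum (br_linr _)) big1 // => k _.
  by rewrite brZr Hh scaler0.
case: g_simple => _ [[x [y Hxy]] ideals].
have line_ideal : lie_ideal br <[h]>%VS.
  by move=> x' y' /vlineP [a ->]; rewrite brZr br_anti central oppr0 scaler0 mem0v.
case: (ideals _ line_ideal) => [line0|lineT].
  by apply/eqP; rewrite -memv0 -line0 memv_line.
move: Hxy.
have /vlineP [a ->] : x \in <[h]>%VS by rewrite lineT memvf.
have /vlineP [b ->] : y \in <[h]>%VS by rewrite lineT memvf.
by rewrite brZl brZr brxx !scaler0 eqxx.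
Qed.

Lemma Cartan_root_kernel (w : 'I_ell -> F) :
  (forall j, \sum_i w i * beta j i = 0) -> forall i, w i = 0.
Proof.
move=> Hw; have h0 : \sum_i w i *: u i = 0.
  apply: center_trivial => k; rewrite (lin_map_sum (br_linl _)).
  under eq_bigr do rewrite brZl br_u_bvec scalerA.
  rewrite -scaler_suml; case: k => [[j|j]|i0] /=.
  - by rewrite Hw scale0r.
  - by under eq_bigr do rewrite mulrN; rewrite sumrN Hw oppr0 scale0r.
  - by rewrite big1 ?scale0r // => i _; rewrite mulr0.
pose c k : F := if k is inr i then w i else 0.
have csum : \sum_k c k *: bvec k = 0.
  by rewrite big_sumType /= big1 ?add0r // => k _; rewrite scale0r.
by move=> i; apply: (bvec_free csum (inr i)).
Qed.

Variables (alpha : 'I_ell -> 'I_q) (cf : 'I_q -> 'I_ell -> nat).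
Hypothesis roots_decomp : forall j i, beta j i = \sum_(r < ell) (cf j r)%:R * beta (alpha r) i.

Lemma simple_roots_free (d : 'I_ell -> F) :
  (forall i, \sum_r d r * beta (alpha r) i = 0) -> forall r, d r = 0.
Proof.
pose A : 'M[F]_ell := \matrix_(r, i) beta (alpha r) i.
have AT_ker0 (v : 'rV_ell) : v *m A^T = 0 -> v = 0.
  move=> /rowP Hv; apply/rowP => i; rewrite mxE; apply: (Cartan_root_kernel (w := v 0)) => j.
  under eq_bigr do rewrite roots_decomp mulr_sumr.
  rewrite exchange_big big1 // => r _.
  have Hr : \sum_i v 0 i * beta (alpha r) i = 0.
    by move: (Hv r); rewrite !mxE; apply: etrans; apply: eq_bigr => i' _; rewrite !mxE.
  by under eq_bigr do rewrite mulrCA; rewrite -mulr_sumr Hr mulr0.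
have A_free : row_free A.
  rewrite row_free_unit -unitmx_tr unitmxE unitfE; apply/negP.
  by move=> /det0P [v /negP vn0 /AT_ker0 v0]; apply: vn0; rewrite v0.
move=> Hd r; have /eqP : (\row_r d r) *m A = 0.
  by apply/rowP => i; rewrite !mxE -[RHS](Hd i); apply: eq_bigr => r' _; rewrite !mxE.
by rewrite (mulmx_free_eq0 _ A_free) => /eqP/rowP/(_ r); rewrite !mxE.
Qed.

Hypothesis roots_nonzero : forall j, exists i, beta j i != 0.
Hypothesis char0 : forall n : nat, (n%:R : F) = 0 -> n = 0%N.

Lemma sum_roots_neq0 (js : seq 'I_q) : js != [::] -> ~ (forall i, \sum_(j <- js) beta j i = 0).
Proof.
case: js => [//|j0 js] _ Hsum.
have cf0 r : (\sum_(j <- j0 :: js) cf j r)%N = 0%N.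
  apply: char0; move: r; apply: simple_roots_free => i; rewrite -[RHS](Hsum i).
  under eq_bigr do rewrite natr_sum mulr_suml.
  by rewrite exchange_big; apply: eq_bigr => j _; rewrite roots_decomp.
have [t] := roots_nonzero j0; rewrite roots_decomp big1 ?eqxx // => r _.
by move: (cf0 r) => /eqP; rewrite big_cons addn_eq0 => /andP[/eqP -> _]; rewrite mul0r.
Qed.

Definition bracket_component y1 y2 k : Prop :=
  exists2 c : bidx -> F, br (vecl y1) (vecl y2) = \sum_k' c k' *: bvec k' & c k != 0.

Lemma bracket_component_E y1 y2 k :
  bracket_component y1 y2 k -> is_E y1 -> is_E y2 -> E_index k.
Proof.
case: y1 y2 => [[[a s1]|//]|//] [[[b s2]|//]|//] [c Hc ck] _ _.
have := weight_component Hc (weight_br (e_weight^~ a) (e_weight^~ b)) ck.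
case: k {ck} => [[j|j]|i] //= Hk.
- case: (@sum_roots_neq0 [:: a; b; j]) => // t.
  by rewrite !big_cons big_nil addr0 addrA -Hk addrC subrr.
- by case: (@sum_roots_neq0 [:: a; b]) => // t; rewrite !big_cons big_nil addr0 -Hk.
Qed.

Lemma bracket_component_F y1 y2 k :
  bracket_component y1 y2 k -> is_F y1 -> is_F y2 -> F_index k.
Proof.
case: y1 y2 => [[//|[a s1]]|//] [[//|[b s2]]|//] [c Hc ck] _ _.
have := weight_component Hc (weight_br (f_weight^~ a) (f_weight^~ b)) ck.
case: k {ck} => [[j|j]|i] //= Hk.
- case: (@sum_roots_neq0 [:: a; b; j]) => // t.
  by rewrite !big_cons big_nil addr0 addrA Hk -opprD subrr.
- case: (@sum_roots_neq0 [:: a; b]) => // t; rewrite !big_cons big_nil addr0.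
  by apply/eqP; rewrite -oppr_eq0 opprD -Hk.
Qed.

Lemma bracket_component_Ul y1 y2 k :
  bracket_component y1 y2 k -> is_U y1 -> k = letter_index y2.
Proof.
case: y1 => [//|[i s1]] [c Hc ck] _.
by rewrite /= (vecl_index y2) br_u_bvec in Hc; apply: bvec_coord_single Hc k ck.
Qed.

Lemma bracket_component_Ur y1 y2 k :
  bracket_component y1 y2 k -> is_U y2 -> k = letter_index y1.
Proof.
case: y2 => [//|[i s2]] [c Hc ck] _.
rewrite /= (vecl_index y1) br_anti br_u_bvec -scaleNr in Hc.
exact: bvec_coord_single Hc k ck.
Qed.

Lemma bracket_component_UU y1 y2 k : is_U y1 -> is_U y2 -> ~ bracket_component y1 y2 k.
Proof.
case: y1 y2 => [//|[i1 s1]] [//|[i2 s2]] _ _ [c /= Hc].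
by rewrite (bvec_free (esym _)) ?eqxx // -Hc Cartan_abelian.
Qed.

Lemma bracket_component_nonE y1 y2 k :
  bracket_component y1 y2 k -> ~~ is_E y1 -> ~~ is_E y2 -> F_index k.
Proof.
move=> Hk /notE_FU /orP[F1|U1] /notE_FU /orP[F2|U2].
- exact: bracket_component_F Hk F1 F2.
- by rewrite (bracket_component_Ur Hk U2) F_index_letter.
- by rewrite (bracket_component_Ul Hk U1) F_index_letter.
- by case: (bracket_component_UU U1 U2 Hk).
Qed.

(** * Straightening words *)

Hypothesis commutator : forall (x y : g) (m n : int) (v : V),
  act x m (act y n v) - act y n (act x m v)
  = act (br x y) (m + n) v + (if m + n == 0 then (m%:~R * frm x y * lev) *: v else 0).

Definition merge_letter k y1 y2 : letter := mk_letter k (letter_s y1 + letter_s y2).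

Lemma mode_sum_merge A y1 y2 w k :
  mode_sum (A ++ merge_letter k y1 y2 :: w) = mode_sum (A ++ y1 :: y2 :: w).
Proof. by rewrite !mode_sum_cat /mode_sum /= /merge_letter letter_s_mk !addnA. Qed.

Lemma eval_swap A y1 y2 w (c : bidx -> F) : creation y1 -> creation y2 ->
  br (vecl y1) (vecl y2) = \sum_k c k *: bvec k ->
  eval (A ++ y1 :: y2 :: w) = eval (A ++ y2 :: y1 :: w)
     + \sum_k c k *: eval (A ++ merge_letter k y1 y2 :: w).
Proof.
move=> C1 C2 Hc; under eq_bigr do rewrite eval_cat -(lin_mapZ (act_word_lin A)).
rewrite !eval_cat -(lin_map_sum (act_word_lin A)) -(lin_mapD (act_word_lin A)); congr act_word.
rewrite /pbw_eval /=; set v := foldr _ vac w.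
have mode_sum2 : letter_mode y1 + letter_mode y2 = - (letter_s y1 + letter_s y2)%N%:Z.
  by rewrite /letter_mode PoszD opprD.
have mode_neq0 : (letter_mode y1 + letter_mode y2 == 0) = false.
  by apply/negbTE; rewrite mode_sum2 oppr_eq0 eqz_nat addn_eq0 negb_and -!lt0n; move: C1; rewrite /creation => ->.
move/eqP: (commutator (vecl y1) (vecl y2) (letter_mode y1) (letter_mode y2) v).
rewrite mode_neq0 addr0 subr_eq => /eqP ->; rewrite addrC; congr (_ + _).
rewrite Hc (lin_map_sum (act_lin_g _ _)); apply: eq_bigr => k _.
by rewrite (lin_mapZ (act_lin_g _ _)) vecl_mk /letter_mode letter_s_mk mode_sum2.
Qed.

Lemma straighten (Q : seq letter -> Prop) :
  (forall A y1 y2 w, Q (A ++ y1 :: y2 :: w) -> ~~ le y1 y2 -> Q (A ++ y2 :: y1 :: w)) ->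
  (forall A y1 y2 w k, Q (A ++ y1 :: y2 :: w) -> ~~ le y1 y2 -> bracket_component y1 y2 k ->
     Q (A ++ merge_letter k y1 y2 :: w)) ->
  forall w, Q w -> all creation w -> lin_comb Q (eval w).
Proof.
move=> Qswap Qmerge w; have [n] := ubnP (size w); elim: n w => // n IHn w Hsz.
have [m] := ubnP (inversions w); elim: m w Hsz => // m IHm w Hsz Hinv Qw Cw.
case Hsort: (sorted le w); first by apply: lin_comb_eval; rewrite // /pbw Hsort.
have [A [y1 [y2 [w' [Ew Hy]]]]] := unsorted_adjacent (negbT Hsort); subst w.
have [c Hc] := bvec_span (br (vecl y1) (vecl y2)).
have [C1 C2] : creation y1 /\ creation y2.
  by move: Cw; rewrite all_cat /= => /andP[_ /and3P[]].
have Hperm := perm_swap_adjacent A y1 y2 w'.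
rewrite (eval_swap A w' C1 C2 Hc); apply: lin_combD.
  apply: IHm; [by rewrite (perm_size Hperm) | | exact: Qswap | by rewrite (perm_all _ Hperm)].
  by apply: leq_trans (inversions_swap A w' Hy) _; rewrite -ltnS.
apply: lin_comb_sum => k _; have [->|ck] := eqVneq (c k) 0; first by rewrite scale0r; apply: lin_comb0.
apply/lin_combZ/IHn; first by move: Hsz; rewrite !size_cat /= !addnS ltnS.
  by apply: Qmerge => //; exists c.
by move: Cw; rewrite !all_cat /= => /andP[-> /and3P[_ _ ->]]; rewrite /creation letter_s_mk ltn_addr.
Qed.

Lemma unsorted_pair_in_prefix (tp : pred letter) P T A y1 y2 w :
  A ++ y1 :: y2 :: w = P ++ T -> sorted le T -> (forall l t, tp l -> t \in T -> le l t) ->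
  all tp P -> ~~ le y1 y2 -> exists2 w', P = A ++ y1 :: y2 :: w' & w = w' ++ T.
Proof.
move=> + HT Hle + Hy; elim: A P => [|a A IH] [|b P] /=.
- by move=> E; rewrite -E /= in HT; case/andP: HT => H _; rewrite H in Hy.
- case=> <-; case: P => [|b' P] /=.
    move=> E /andP[Hy1 _]; have := Hle y1 y2 Hy1; rewrite -E mem_head => /(_ isT) H.
    by rewrite H in Hy.
  by case=> <- -> _; exists P.
- move=> E; rewrite -E in HT; move/path_sorted: HT => /cat_sorted2[_ /andP[H _]].
  by rewrite H in Hy.
- by case=> <- /IH H /andP[_ /H] [w' -> ->]; exists w'.
Qed.

Lemma straighten_prefix (tp : pred letter) T (R : seq letter -> Prop) :
  sorted le T -> all creation T -> (forall l t, tp l -> t \in T -> le l t) ->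
  (forall A y1 y2 w, R (A ++ y1 :: y2 :: w) -> all tp (A ++ y1 :: y2 :: w) ->
     R (A ++ y2 :: y1 :: w)) ->
  (forall A y1 y2 w k, R (A ++ y1 :: y2 :: w) -> all tp (A ++ y1 :: y2 :: w) ->
     bracket_component y1 y2 k -> tp (merge_letter k y1 y2) /\ R (A ++ merge_letter k y1 y2 :: w)) ->
  forall P, all tp P -> all creation P -> R P ->
  lin_comb (fun x => exists2 P', x = P' ++ T & all tp P' /\ R P') (eval (P ++ T)).
Proof.
move=> HT CT Hle Rswap Rmerge P tpP CP RP.
apply: straighten; [| |by exists P|by rewrite all_cat CP].
- move=> A y1 y2 w [P' E [tpP' RP']] Hy.
  have [w' EP' Ew] := unsorted_pair_in_prefix E HT Hle tpP' Hy; subst P' w.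
  exists (A ++ y2 :: y1 :: w'); first by rewrite -catA.
  by rewrite (perm_all _ (perm_swap_adjacent _ _ _ _)); split => //; apply: Rswap.
- move=> A y1 y2 w k [P' E [tpP' RP']] Hy Hk.
  have [w' EP' Ew] := unsorted_pair_in_prefix E HT Hle tpP' Hy; subst P' w.
  have [tpm Rm] := Rmerge _ _ _ _ _ RP' tpP' Hk.
  exists (A ++ merge_letter k y1 y2 :: w'); first by rewrite -catA.
  by split => //; move: tpP'; rewrite !all_cat /= tpm => /andP[-> /and3P[_ _ ->]].
Qed.

Lemma pbw_parts x : pbw x ->
  [/\ sorted le (minus x ++ zero x), sorted le (zero x), all creation (plus x),
      all creation (minus x) & all creation (zero x)].
Proof.
move=> /andP[Hs Hc]; have E := sorted_pbw_parts Hs; rewrite E in Hs Hc.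
have [_ sMZ] := cat_sorted2 Hs; have [_ sZ] := cat_sorted2 sMZ.
by move: Hc; rewrite !all_cat => /and3P[].
Qed.

Lemma straighten_E_prefix A x : all is_E A -> all creation A -> pbw x ->
  lin_comb (fun x' => [/\ size (plus x') <= size A + size (plus x),
                          minus x' = minus x & zero x' = zero x]%N) (eval (A ++ x)).
Proof.
move=> EA CA Hx; have [sMZ _ Cp CM CZ] := pbw_parts Hx.
have -> : A ++ x = (A ++ plus x) ++ (minus x ++ zero x).
  by rewrite -catA -sorted_pbw_parts //; case/andP: Hx.
pose R P := (size P <= size A + size (plus x))%N.
refine (lin_comb_weaken _ (straighten_prefix (tp := is_E) (R := R) sMZ _ _ _ _ _ _ _)).
- move=> x' _ [P' -> [EP' RP']].
  by have [-> -> ->] := pbw_parts_cat EP' (all_minus x) (all_zero x).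
- by rewrite all_cat CM CZ.
- move=> l t El; rewrite mem_cat => /orP[] Ht; apply: le_E_notE El _.
    by rewrite F_notE // (allP (all_minus x)).
  by rewrite U_notE // (allP (all_zero x)).
- by move=> A' y1 y2 w; rewrite /R (perm_size (perm_swap_adjacent _ _ _ _)).
- move=> A' y1 y2 w k RP; rewrite all_cat /= => /andP[_ /and3P[E1 E2 _]] Hk; split.
    by rewrite is_E_mk (bracket_component_E Hk).
  by apply: leq_trans RP; rewrite !size_cat /= !addnS ltnS leqnSn.
- by rewrite all_cat EA all_plus.
- by rewrite all_cat CA.
- by rewrite /R size_cat.
Qed.

Lemma straighten_F_block A Z : all is_F A -> all creation A -> A != [::] ->
  sorted le Z -> all is_U Z -> all creation Z ->
  lin_comb (fun x' => [/\ plus x' = [::], minus x' != [::],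
                          mode_sum (minus x') = mode_sum A & zero x' = Z]) (eval (A ++ Z)).
Proof.
move=> FA CA A0 sZ UZ CZ.
pose R P := P != [::] /\ mode_sum P = mode_sum A.
refine (lin_comb_weaken _ (straighten_prefix (tp := is_F) (R := R) sZ CZ _ _ _ FA CA _)).
- move=> x' _ [P' -> [FP' [P'0 sP']]].
  by have := pbw_parts_cat (E' := [::]) isT FP' UZ => -[/= -> -> ->].
- by move=> l t Fl Zt; apply: le_F_U Fl _; apply: (allP UZ).
- move=> A' y1 y2 w [_ sP] _.
  by split; [case: A' {sP} | rewrite (mode_sum_perm (perm_swap_adjacent _ _ _ _))].
- move=> A' y1 y2 w k [_ sP]; rewrite all_cat /= => /andP[_ /and3P[F1 F2 _]] Hk; split.
    by rewrite is_F_mk (bracket_component_F Hk).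
  by split; [case: A' {sP} | rewrite mode_sum_merge].
- by [].
Qed.

Lemma straighten_U_block A : all is_U A -> all creation A ->
  lin_comb (fun x' => all is_U x' /\ size x' = size A) (eval A).
Proof.
move=> UA CA; have -> : eval A = eval (A ++ [::]) by rewrite cats0.
pose R P := size P = size A.
refine (lin_comb_weaken _ (straighten_prefix (tp := is_U) (R := R) _ _ _ _ _ _ _ _)) => //.
- by move=> x' _ [P' -> [UP' RP']]; rewrite cats0.
- by move=> A' y1 y2 w; rewrite /R (perm_size (perm_swap_adjacent _ _ _ _)).
- move=> A' y1 y2 w k _; rewrite all_cat /= => /andP[_ /and3P[U1 U2 _]] Hk.
  by case: (bracket_component_UU U1 U2 Hk).
Qed.

(** * Moving f- and u-letters into PBW monomials *)

Lemma allU_parts x : all is_U x -> [/\ plus x = [::], minus x = [::] & zero x = x].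
Proof. by move=> Ux; have := pbw_parts_cat (E' := [::]) (M := [::]) isT isT Ux. Qed.

(* Invariant for moving y(-s), y = f_j or u^i, into a PBW monomial with f-part M and
   u-part Z; n bounds the number of e-letters. *)
Definition admissible (n : nat) (M Z x : seq letter) : Prop :=
  [/\ (size (plus x) <= n)%N, M != [::] -> minus x != [::] &
      (minus x = M /\ (zero x = Z \/ size (zero x) = (size Z).+1))
      \/ (mode_sum M < mode_sum (minus x) /\ size (zero x) <= size Z)%N].

Lemma admissible_weaken n n' M Z x : (n <= n')%N -> admissible n M Z x -> admissible n' M Z x.
Proof. by move=> nn' [H1 H2 H3]; split => //; apply: leq_trans nn'. Qed.

Lemma admissible_E_prefix A x n M Z : all is_E A -> all creation A -> pbw x ->
  admissible n M Z x -> lin_comb (admissible (size A + n) M Z) (eval (A ++ x)).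
Proof.
move=> EA CA Hx [P1 M1 Z1]; apply: lin_comb_weaken (straighten_E_prefix EA CA Hx).
move=> x' _ [H1 Mx' Zx']; rewrite /admissible Mx' Zx'.
by split => //; apply: leq_trans H1 _; rewrite leq_add2l.
Qed.

Lemma admissible_E_head m x : is_E m -> creation m -> pbw x ->
  lin_comb (admissible (size (plus x)).+1 (minus x) (zero x)) (eval (m :: x)).
Proof.
move=> Em Cm Hx; have := @straighten_E_prefix [:: m] x; rewrite /= Em Cm => /(_ isT isT Hx).
apply: lin_comb_weaken => x' _ [H1 Mx' Zx']; rewrite /admissible Mx' Zx'.
by split => //; left; split => //; left.
Qed.

Lemma admissible_F_block l x M Z : is_F l -> creation l -> pbw x -> plus x = [::] ->
  (mode_sum M < letter_s l + mode_sum (minus x))%N -> (size (zero x) <= size Z)%N ->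
  lin_comb (admissible 0 M Z) (eval (l :: x)).
Proof.
move=> Fl Cl Hx P0 HM HZ; have [_ sZ _ CM CZ] := pbw_parts Hx.
have -> : l :: x = (l :: minus x) ++ zero x.
  by rewrite cat_cons {1}(sorted_pbw_parts (andP Hx).1) P0.
apply: lin_comb_weaken (straighten_F_block _ _ _ sZ (all_zero x) CZ).
- move=> x' _ [P' M0 sdM Z']; rewrite /admissible P' sdM Z'.
  by split => //; right.
- by rewrite /= Fl all_minus.
- by rewrite /= Cl.
- by [].
Qed.

Lemma admissible_past_E y l x : is_E l -> pbw (l :: x) -> creation y ->
  lin_comb (admissible (size (plus x)) (minus x) (zero x)) (eval (y :: x)) ->
  (forall k, bracket_component y l k ->
     lin_comb (admissible (size (plus x)).+1 (minus x) (zero x)) (eval (merge_letter k y l :: x))) ->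
  lin_comb (admissible (size (plus x)).+1 (minus x) (zero x)) (eval (y :: l :: x)).
Proof.
move=> El Hlx Cy Hyx Hmerge; have Cl := pbw_head_creation Hlx.
have [c Hc] := bvec_span (br (vecl y) (vecl l)).
have -> : eval (y :: l :: x) = eval (l :: y :: x) + \sum_k c k *: eval (merge_letter k y l :: x).
  exact: (eval_swap [::] x Cy Cl Hc).
apply: lin_combD.
  rewrite eval_cons; apply: (lin_comb_linear (act_lin _ _)) Hyx => x'' Hx'' adm.
  by rewrite -eval_cons; apply: (admissible_E_prefix (A := [:: l])) => //=; rewrite ?El ?Cl.
apply: lin_comb_sum => k _; have [->|ck] := eqVneq (c k) 0.
  by rewrite scale0r; apply: lin_comb0.
by apply/lin_combZ/Hmerge; exists c.
Qed.

Lemma admissible_U_allU x y : all is_U x -> all creation x -> is_U y -> creation y ->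
  lin_comb (admissible (size (plus x)) (minus x) (zero x)) (eval (y :: x)).
Proof.
move=> Ux Cx Uy Cy; have [-> -> ->] := allU_parts Ux.
apply: lin_comb_weaken (straighten_U_block (A := y :: x) _ _); rewrite /= ?Uy ?Cy //.
move=> x' _ [Ux' sx']; have [P' M' Z'] := allU_parts Ux'; rewrite /admissible P' M' Z'.
by split => //; left; split => //; right.
Qed.

Lemma admissible_U_past_F y l x : pbw (l :: x) -> is_F l -> is_U y -> creation y ->
  lin_comb (admissible 0 (minus x) (zero x)) (eval (y :: x)) ->
  lin_comb (admissible 0 (l :: minus x) (zero x)) (eval (y :: l :: x)).
Proof.
move=> Hlx Fl Uy Cy IH; have Cl := pbw_head_creation Hlx; have Hx := pbw_behead Hlx.
have P0 : plus x = [::] by have := pbw_notE_head Hlx (negbT (F_notE Fl)); rewrite /pbw_plus /= F_notE.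
have [c Hc] := bvec_span (br (vecl y) (vecl l)).
have -> : eval (y :: l :: x) = eval (l :: y :: x) + \sum_k c k *: eval (merge_letter k y l :: x).
  exact: (eval_swap [::] x Cy Cl Hc).
apply: lin_combD.
  rewrite eval_cons; apply: (lin_comb_linear (act_lin _ _)) IH => x'' Hx'' [].
  rewrite leqn0 size_eq0 => /eqP P0'' _ [[M'' Z'']|[sd'' sz'']]; rewrite -eval_cons; last first.
    by apply: admissible_F_block => //; rewrite mode_sum_cons ltn_add2l.
  have [P1 M1 Z1] := minus_cons_F x'' Fl.
  apply: lin_comb_eval; last by rewrite /admissible P1 M1 Z1 P0'' M''; split => //; left.
  have x''E : x'' = minus x'' ++ zero x'' by rewrite {1}(sorted_pbw_parts (andP Hx'').1) P0''.
  have xE : x = minus x ++ zero x by rewrite {1}(sorted_pbw_parts (andP Hx).1) P0.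
  have sl : sorted le (l :: minus x).
    by have := (andP Hlx).1; rewrite {1}xE -cat_cons => /cat_sorted2[].
  apply/andP; split; last by apply/andP; split => //; case/andP: Hx''.
  rewrite x''E; apply: sorted_F_cons Fl _ _ (all_zero x''); first by rewrite M''.
  by rewrite -x''E; exact: (andP Hx'').1.
apply: lin_comb_sum => k _; have [->|ck] := eqVneq (c k) 0.
  by rewrite scale0r; apply: lin_comb0.
have Hk : bracket_component y l k by exists c.
apply/lin_combZ/admissible_F_block => //.
- by rewrite is_F_mk (bracket_component_Ul Hk Uy) F_index_letter.
- by rewrite /creation letter_s_mk ltn_addr.
- by rewrite mode_sum_cons letter_s_mk -addnA -[X in (X < _)%N]add0n ltn_add2r.
Qed.

Lemma admissible_U_head x y : pbw x -> is_U y -> creation y ->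
  lin_comb (admissible (size (plus x)) (minus x) (zero x)) (eval (y :: x)).
Proof.
elim: x => [|l x IH] Hx Uy Cy; first exact: admissible_U_allU.
have Hx1 := pbw_behead Hx.
case/or3P: (letter_kinds l) => Hl.
- have [-> -> ->] := plus_cons_E x Hl.
  apply: admissible_past_E => // [|k Hk]; first exact: IH.
  apply: admissible_E_head Hx1; last by rewrite /creation letter_s_mk ltn_addr.
  by rewrite is_E_mk (bracket_component_Ul Hk Uy) E_index_letter.
- have P0 := pbw_notE_head Hx (negbT (F_notE Hl)).
  have [P1 -> ->] := minus_cons_F x Hl; rewrite P0 /=.
  have Px : plus x = [::] by rewrite -P1.
  by apply: admissible_U_past_F => //; have := IH Hx1 Uy Cy; rewrite Px.
- by apply: admissible_U_allU => //; [apply: pbw_U_head | case/andP: Hx].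
Qed.

Lemma admissible_F_head x y : pbw x -> is_F y -> creation y ->
  lin_comb (admissible (size (plus x)) (minus x) (zero x)) (eval (y :: x)).
Proof.
have noE_case x' y' : pbw x' -> plus x' = [::] -> is_F y' -> creation y' ->
    lin_comb (admissible 0 (minus x') (zero x')) (eval (y' :: x')).
  by move=> *; apply: admissible_F_block => //; rewrite -[X in (X < _)%N]add0n ltn_add2r.
elim: x y => [|l x IH] y Hx Fy Cy; first exact: noE_case.
case El: (is_E l); last first.
  by have P0 := pbw_notE_head Hx (negbT El); rewrite P0; apply: noE_case.
have Hx1 := pbw_behead Hx; have [-> -> ->] := plus_cons_E x El.
apply: admissible_past_E => // [|k _]; first exact: IH.
have Cm : creation (merge_letter k y l) by rewrite /creation letter_s_mk ltn_addr.
case/or3P: (letter_kinds (merge_letter k y l)) => Hm; first exact: admissible_E_head.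
- by apply: lin_comb_weaken (IH _ Hx1 Hm Cm) => x' _; apply: admissible_weaken.
- by apply: lin_comb_weaken (admissible_U_head Hx1 Hm Cm) => x' _; apply: admissible_weaken.
Qed.

Lemma merge_F_parts A y1 y2 w m : is_F m -> letter_s m = (letter_s y1 + letter_s y2)%N ->
  (mode_sum (minus (A ++ y1 :: y2 :: w)) <= mode_sum (minus (A ++ m :: w)))%N /\
  (size (zero (A ++ m :: w)) <= size (zero (A ++ y1 :: y2 :: w)))%N.
Proof.
move=> Fm sm; rewrite /pbw_minus /pbw_zero !filter_cat !mode_sum_cat !size_cat /= Fm (F_notU Fm).
by split; do 2 case: ifP => _; rewrite /= ?mode_sum_cons ?sm; lia.
Qed.

Lemma straighten_nonE (n0 nz : nat) w : all (predC is_E) w -> all creation w ->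
  (n0 < mode_sum (minus w))%N -> (size (zero w) <= nz)%N ->
  lin_comb (fun x => [/\ all (predC is_E) x, n0 < mode_sum (minus x) & size (zero x) <= nz]%N)
    (eval w).
Proof.
move=> nEw Cw Hsd Hsz; apply: straighten => //.
- move=> A y1 y2 w' [nE sd sz] _; have Hp := perm_swap_adjacent A y1 y2 w'.
  rewrite (perm_all _ Hp) /pbw_minus /pbw_zero (mode_sum_perm (perm_filter _ Hp)).
  by rewrite (perm_size (perm_filter _ Hp)).
- move=> A y1 y2 w' k [nE sd sz] _ Hk.
  have [nE1 nE2] : ~~ is_E y1 /\ ~~ is_E y2 by move: nE; rewrite all_cat /= => /andP[_ /and3P[]].
  have Fm : is_F (merge_letter k y1 y2) by rewrite is_F_mk (bracket_component_nonE Hk).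
  have [sd_le sz_le] := merge_F_parts A w' Fm (letter_s_mk _ _).
  split; [|exact: leq_trans sd_le|exact: leq_trans sz].
  by move: nE; rewrite !all_cat /= (F_notE Fm) => /andP[-> /and3P[_ _ ->]].
Qed.

Notation conditions := (@lemma3p2_conditions ell q).

Lemma conditions_of_admissible z x :
  admissible (size (plus z)) (minus z) (zero z) x -> conditions z x.
Proof.
move=> [G1 G2 G3]; rewrite /lemma3p2_conditions !addn1; split => //.
- split; first exact: leq_trans G1 _.
  by case: G3 => [[_ [->|->]]|[_ H]] //; apply: leq_trans H _.
- move=> Hm; case: G3 => [[_ [->|->]]|[H _]]; [by right|by left|].
  by rewrite Hm ltnn in H.
- by move=> Hs; case: G3 => [[-> _]//|[_]]; rewrite Hs ltnn.
Qed.

Lemma conditions_of_same_zero z x : (size (plus x) <= (size (plus z)).+1)%N ->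
  zero x = zero z -> (minus z != [::] -> minus x != [::]) -> conditions z x.
Proof.
move=> H1 Zx H3; rewrite /lemma3p2_conditions Zx !addn1; split => //; first by right.
by move/eqP; rewrite eqn_leq ltnn andbF.
Qed.

Lemma conditions_of_mode_increase z x : (size (plus x) <= (size (plus z)).+1)%N ->
  (mode_sum (minus z) < mode_sum (minus x))%N -> (size (zero x) <= size (zero z))%N ->
  conditions z x.
Proof.
move=> H1 H2 H3; rewrite /lemma3p2_conditions !addn1; split => //.
- by split; last exact: leq_trans H3 _.
- by move=> _; apply: mode_sum_gt0; apply: leq_ltn_trans H2.
- by move=> Hm; rewrite Hm ltnn in H2.
- by move=> Hs; rewrite Hs ltnn in H3.
Qed.

(** * The two sums in L~_{-1} *)

Hypothesis vacuum : forall (x : g) (n : int), 0 <= n -> act x n vac = 0.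

Lemma act0_cons (x : g) l (v : V) :
  act x 0 (act (vecl l) (letter_mode l) v)
  = act (vecl l) (letter_mode l) (act x 0 v) + act (br x (vecl l)) (letter_mode l) v.
Proof.
have := commutator x (vecl l) 0 (letter_mode l) v.
rewrite add0r mulr0z !mul0r scale0r if_same addr0 => /eqP; rewrite subr_eq => /eqP ->.
by rewrite addrC.
Qed.

Lemma act_u0_eval i w : exists lam : F, act (u i) 0 (eval w) = lam *: eval w.
Proof.
elim: w => [|l w [lam IH]]; first by exists 0; rewrite scale0r vacuum.
exists (lam + index_weight (letter_index l) i).
rewrite eval_cons act0_cons IH vecl_index br_u_bvec.
by rewrite (lin_mapZ (act_lin _ _)) (lin_mapZ (act_lin_g _ _)) -scalerDl.
Qed.

Lemma Cartan_term z i : pbw z -> lin_comb (conditions z) (act (u i) (-1) (act (u i) 0 (eval z))).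
Proof.
move=> Hz; have [lam ->] := act_u0_eval i z; rewrite (lin_mapZ (act_lin _ _)); apply: lin_combZ.
have -> : act (u i) (-1) (eval z) = eval (inr (i, 1%N) :: z) by [].
apply: lin_comb_weaken (admissible_U_head Hz (y := inr (i, 1%N)) isT isT) => x _.
exact: conditions_of_admissible.
Qed.

Lemma pbw_split z A l w : pbw z -> z = A ++ l :: w ->
  [/\ pbw (l :: w), sorted le A, all creation A
    & forall a, a \in A -> (letter_block a <= letter_block l)%N].
Proof.
move=> /andP[sz Cz] Ez; rewrite Ez in sz Cz.
have [blockA _] := sorted_cat_cons_block sz; have [sA slw] := cat_sorted2 sz.
by move: Cz; rewrite all_cat => /andP[CA Clw]; split; rewrite // /pbw slw.
Qed.

Notation e_letter j := (inl (inl (j, 1%N)) : letter).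

Lemma root_term_E z j A l w m : pbw z -> z = A ++ l :: w -> is_E l -> creation m ->
  lin_comb (conditions z) (eval (e_letter j :: A ++ m :: w)).
Proof.
move=> Hz Ez El Cm; have [Hlw _ CA blockA] := pbw_split Hz Ez; have Hw := pbw_behead Hlw.
have EA : all is_E A by apply/allP => a /blockA; rewrite (letter_blockE l) El => /block0_E.
have EjA : all is_E (e_letter j :: A) by [].
have CjA : all creation (e_letter j :: A) by [].
have [Pz Mz Zz] : [/\ size (plus z) = (size A + size (plus w)).+1, minus z = minus w & zero z = zero w].
  have [nFA nUA] : filter is_F A = [::] /\ filter is_U A = [::].
    by split; apply: filter_nil; apply: sub_all EA => a /= Ea; rewrite ?E_notF ?E_notU.
  rewrite Ez /pbw_plus /pbw_minus /pbw_zero !filter_cat (all_filterP EA) nFA nUA /=.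
  by rewrite El (E_notF El) (E_notU El) size_cat /= addnS.
have tail_admissible :
    lin_comb (admissible (size (plus w)) (minus w) (zero w)) (eval (m :: w)) ->
    lin_comb (conditions z) (eval (e_letter j :: A ++ m :: w)).
  rewrite -cat_cons eval_cat => adm; apply: (lin_comb_linear (act_word_lin _)) adm => x'' Hx'' adm.
  rewrite -eval_cat; apply: lin_comb_weaken (admissible_E_prefix EjA CjA Hx'' adm) => x' _ adm'.
  by apply: conditions_of_admissible; rewrite Pz Mz Zz -addSn.
case/or3P: (letter_kinds m) => Hm.
- have := @straighten_E_prefix ((e_letter j :: A) ++ [:: m]) w.
  rewrite !all_cat EjA CjA /= Hm Cm -catA => /(_ isT isT Hw).
  apply: lin_comb_weaken => x' _ [H1 Mx' Zx']; apply: conditions_of_same_zero.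
  + by rewrite Pz; apply: leq_trans H1 _; rewrite size_cat /= addn1 !addSn.
  + by rewrite Zx' Zz.
  + by rewrite Mx' Mz.
- exact/tail_admissible/admissible_F_head.
- exact/tail_admissible/admissible_U_head.
Qed.

Lemma root_term_F z j A l w m : pbw z -> z = A ++ l :: w -> is_F l -> is_F m -> creation m ->
  lin_comb (conditions z) (eval (e_letter j :: A ++ m :: w)).
Proof.
move=> Hz Ez Fl Fm Cm; have [Hlw sA CA blockA] := pbw_split Hz Ez; have Hw := pbw_behead Hlw.
have nUA : zero A = [::].
  apply: filter_nil; apply/allP => a /blockA.
  by rewrite (letter_blockE l) (F_notE Fl) Fl => /block1_notU.
have Pw : plus w = [::].
  by have := pbw_notE_head Hlw (negbT (F_notE Fl)); rewrite /pbw_plus /= F_notE.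
have EA := sorted_pbw_parts sA; rewrite nUA cats0 in EA.
have Ew := sorted_pbw_parts (andP Hw).1; rewrite Pw /= in Ew.
have [_ sZ _ CM CZ] := pbw_parts Hw.
have Ez' : z = plus A ++ (minus A ++ l :: minus w) ++ zero w.
  by rewrite Ez {1}EA {1}Ew -!catA.
have FM : all is_F (minus A ++ l :: minus w) by rewrite all_cat all_minus /= Fl all_minus.
have [Pz _ Zz] := pbw_parts_cat (all_plus A) FM (all_zero w); rewrite -Ez' in Pz Zz.
have -> : e_letter j :: A ++ m :: w = (e_letter j :: plus A) ++ ((minus A ++ m :: minus w) ++ zero w).
  by rewrite {1}EA {1}Ew /= -!catA.
rewrite eval_cat; apply: (lin_comb_linear (act_word_lin _)) (straighten_F_block _ _ _ sZ (all_zero w) CZ).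
- move=> x'' Hx'' [P'' M'' _ Z'']; rewrite -eval_cat.
  have := @straighten_E_prefix (e_letter j :: plus A) x''; rewrite /= all_plus (sub_all_filter _ CA).
  move=> /(_ isT isT Hx''); apply: lin_comb_weaken => x' _ [H1 Mx' Zx'].
  apply: conditions_of_same_zero; rewrite ?Pz ?Zx' ?Z'' ?Zz ?Mx' //.
  by move: H1; rewrite P'' addn0.
- by rewrite all_cat all_minus /= Fm all_minus.
- by rewrite all_cat (sub_all_filter _ CA) /= Cm.
- by case: (minus A).
Qed.

Lemma root_term_U z j A l w m : pbw z -> z = A ++ l :: w -> is_U l -> is_F m -> creation m ->
  lin_comb (conditions z) (eval (e_letter j :: A ++ m :: w)).
Proof.
move=> Hz Ez Ul Fm Cm; have [Hlw sA CA _] := pbw_split Hz Ez.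
have /andP[_ Uw] := pbw_U_head Hlw Ul; have /andP[_ Cw] := pbw_behead Hlw.
have EA := sorted_pbw_parts sA.
have UZ : all is_U (zero A ++ l :: w) by rewrite all_cat all_zero /= Ul.
have Ez' : z = plus A ++ minus A ++ (zero A ++ l :: w) by rewrite Ez {1}EA -!catA.
have [Pz Mz Zz] := pbw_parts_cat (all_plus A) (all_minus A) UZ; rewrite -Ez' in Pz Mz Zz.
pose T := minus A ++ zero A ++ m :: w.
have -> : e_letter j :: A ++ m :: w = (e_letter j :: plus A) ++ T by rewrite {1}EA /T /= -!catA.
have [MT ZT] : minus T = minus A ++ [:: m] /\ zero T = zero A ++ w.
  rewrite /T !minus_cat !zero_cat; have [_ -> ->] := minus_cons_F w Fm.
  rewrite (minus_allF (all_minus A)) (minus_allU (all_zero A)) (zero_allF (all_minus A)).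
  by rewrite (zero_allU (all_zero A)) (minus_allU Uw) (zero_allU Uw).
have := @straighten_nonE (mode_sum (minus A)) (size (zero A) + size w) T.
rewrite MT ZT mode_sum_cat size_cat -[X in (X < _)%N]addn0 ltn_add2l.
have nET : all (predC is_E) T.
  rewrite /T !all_cat /= (F_notE Fm); apply/and4P; split.
  - by apply: sub_all (all_minus A) => a /= /F_notE ->.
  - by apply: sub_all (all_zero A) => a /= /U_notE ->.
  - by [].
  - by apply: sub_all Uw => a /= /U_notE ->.
have CT : all creation T by rewrite /T !all_cat !sub_all_filter //= Cm Cw.
have Cm' : (0 < mode_sum [:: m])%N by rewrite /mode_sum /= addn0.
move=> /(_ nET CT Cm' (leqnn _)); rewrite eval_cat; apply: (lin_comb_linear (act_word_lin _)).
move=> x'' Hx'' [nE'' sd'' sz'']; rewrite -eval_cat.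
have P'' : plus x'' = [::] by apply: filter_nil.
have := @straighten_E_prefix (e_letter j :: plus A) x''; rewrite /= all_plus (sub_all_filter _ CA).
move=> /(_ isT isT Hx''); apply: lin_comb_weaken => x' _ [H1 Mx' Zx'].
apply: conditions_of_mode_increase; rewrite ?Pz ?Mz ?Mx' ?Zx' ?Zz //.
- by move: H1; rewrite P'' addn0.
- by apply: leq_trans sz'' _; rewrite size_cat /= addnS leqW.
Qed.

Lemma root_term_component z j A l w k : pbw z -> z = A ++ l :: w ->
  bracket_component (inl (inr (j, 0%N))) l k ->
  lin_comb (conditions z) (eval (e_letter j :: A ++ mk_letter k (letter_s l) :: w)).
Proof.
move=> Hz Ez Hk; have [Hlw _ _ _] := pbw_split Hz Ez.
have Cm : creation (mk_letter k (letter_s l)).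
  by rewrite /creation letter_s_mk; exact: (pbw_head_creation Hlw).
case/or3P: (letter_kinds l) => Hl; first exact: root_term_E Hz Ez Hl Cm.
all: have Fm : is_F (mk_letter k (letter_s l)).
all: try by rewrite is_F_mk (bracket_component_nonE Hk) // ?(F_notE Hl) ?(U_notE Hl).
- exact: root_term_F Hz Ez Hl Fm Cm.
- exact: root_term_U Hz Ez Hl Fm Cm.
Qed.

Lemma root_term z j : pbw z -> lin_comb (conditions z) (act (e j) (-1) (act (f j) 0 (eval z))).
Proof.
move=> Hz; suff split_z w A : z = A ++ w ->
    lin_comb (conditions z) (act (e j) (-1) (act_word A (act (f j) 0 (eval w)))).
  exact: (split_z z [::]).
elim: w A => [|l w IH] A Ez.
  by rewrite vacuum // (lin_map0 (act_word_lin A)) (lin_map0 (act_lin _ _)); apply: lin_comb0.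
rewrite eval_cons act0_cons (lin_mapD (act_word_lin A)) (lin_mapD (act_lin _ _)); apply: lin_combD.
  have -> : act_word A (act (vecl l) (letter_mode l) (act (f j) 0 (eval w)))
          = act_word (A ++ [:: l]) (act (f j) 0 (eval w)) by rewrite /act_word foldr_cat.
  by apply: IH; rewrite Ez -catA.
have [c Hc] := bvec_span (br (f j) (vecl l)).
rewrite Hc (lin_map_sum (act_lin_g _ _)) (lin_map_sum (act_word_lin A)) (lin_map_sum (act_lin _ _)).
apply: lin_comb_sum => k _.
rewrite (lin_mapZ (act_lin_g _ _)) (lin_mapZ (act_word_lin A)) (lin_mapZ (act_lin _ _)).
have [->|ck] := eqVneq (c k) 0; first by rewrite scale0r; apply: lin_comb0.
have -> : act (bvec k) (letter_mode l) (eval w) = eval (mk_letter k (letter_s l) :: w).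
  by rewrite eval_cons vecl_mk /letter_mode letter_s_mk.
rewrite -eval_cat; apply: lin_combZ.
have -> : forall x, act (e j) (-1) (eval x) = eval (e_letter j :: x) by [].
by apply: root_term_component Hz Ez _; exists c.
Qed.

Lemma tildeL_m1_lin_comb (hv : F) z : pbw z ->
  lin_comb (conditions z) (tildeL_m1 u e f act lev hv (eval z)).
Proof.
move=> Hz; apply/lin_combZ/lin_combD; apply: lin_comb_sum => i _.
  exact: Cartan_term.
exact: root_term.
Qed.

End Straightening.

Theorem lemma3p2 (R : realType) (ell q : nat) (g : vectType R[i])
    (br : g -> g -> g) (frm : g -> g -> R[i])
    (u : 'I_ell -> g) (e f : 'I_q -> g) (beta : 'I_q -> 'I_ell -> R[i])
    (hv k : R[i]) (V : lmodType R[i]) (vac : V) (act : g -> int -> V -> V) :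
  simple_lie_setup br frm u e f beta ->
  dual_coxeter br u e f hv ->
  k + hv != 0 ->
  universal_affine_VA u e f vac act br frm k ->
  forall z : seq (letter ell q), pbw z ->
    pbw_lin_comb u e f vac act (lemma3p2_conditions z)
      (tildeL_m1 u e f act k hv (pbw_eval u e f vac act z)).
Proof.
move=> [[g_simple _] g_basis [uu ue uf roots_nonzero] [[alpha [cf [decomp _ _]]] _]] _ _.
move=> [act_linl act_linr commutator vacuum _] z Hz.
have char0 (n : nat) : (n%:R : R[i]) = 0 -> n = 0%N.
  by move/eqP; rewrite Num.Theory.pnatr_eq0 => /eqP.
exact: (tildeL_m1_lin_comb act_linl act_linr g_simple.1 g_basis uu ue uf g_simple decomp
          roots_nonzero char0 commutator vacuum).
Qed.
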